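(* Let $\mathsf{K}$ be one of the varieties $\mathsf{ISL}$, $\mathsf{bISL}$, $\mathsf{PDL}$, $\mathsf{IL}$, $\mathsf{HA}$ (defined in the context), and let $\boldsymbol{A} \in \mathsf{K}$. Then there exist a Heyting algebra $\boldsymbol{B}$ and an embedding of $\boldsymbol{A}$ into the reduct $\boldsymbol{B}^-$ of $\boldsymbol{B}$ to the language of $\mathsf{K}$, such that $\boldsymbol{B}^- \in \mathbb{U}(\boldsymbol{A})$, where $\mathbb{U}(\boldsymbol{A}) = \mathbb{I}\mathbb{S}\mathbb{P}_{u}(\boldsymbol{A})$ is the least universal class containing $\boldsymbol{A}$ (equivalently, $\boldsymbol{B}^-$ satisfies every universal first-order sentence true in $\boldsymbol{A}$).
   Context: A semilattice $\langle A;\land\rangle$ is ordered by $a \le b$ iff $a\land b = a$. The varieties are: $\mathsf{ISL}$ (implicative semilattices), algebras $\langle A;\land,\to,1\rangle$ where $\langle A;\land\rangle$ is a semilattice with maximum $1$ and $c\land a\le b \iff c \le a\to b$ for all $a,b,c$; $\mathsf{bISL}$ (bounded implicative semilattices), algebras $\langle A;\land,\to,0,1\rangle$ where $\langle A;\land,\to,1\rangle\in\mathsf{ISL}$ and $0$ is the minimum; $\mathsf{PDL}$ (pseudocomplemented distributive lattices), algebras $\langle A;\land,\lor,\lnot,0,1\rangle$ where $\langle A;\land,\lor\rangle$ is a distributive lattice with minimum $0$ and maximum $1$ and $c\land a = 0 \iff c\le \lnot a$; $\mathsf{IL}$ (implicative lattices), algebras $\langle A;\land,\lor,\to,1\rangle$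 that are lattices whose meet-semilattice reduct with $\to,1$ is in $\mathsf{ISL}$; $\mathsf{HA}$ (Heyting algebras), algebras $\langle A;\land,\lor,\to,0,1\rangle$ that are implicative lattices with minimum $0$. Each of these is the class of subreducts of Heyting algebras in the respective language. The universal class generated by a class of algebras is the class of all algebras satisfying all universal sentences it satisfies; it equals $\mathbb{I}\mathbb{S}\mathbb{P}_u$ of the class (isomorphic copies of subalgebras of ultraproducts). *)

(** An algebra of one of the smaller languages is represented by such a record
    whose fields outside that language are irrelevant (nothing below depends on
    them when working in that language). *)
Record alg : Type := Alg {
  car : Type;
  meet : car -> car -> car;
  join : car -> car -> car;
  imp  : car -> car -> car;
  neg  : car -> car;
  bot  : car;
  top  : car
}.

Inductive variety : Type := ISL | bISL | PDL | IL | HA.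

Definition has_meet (K : variety) : bool := true.
Definition has_top  (K : variety) : bool := true.
Definition has_join (K : variety) : bool :=
  match K with PDL | IL | HA => true | _ => false end.
Definition has_imp (K : variety) : bool :=
  match K with PDL => false | _ => true end.
Definition has_neg (K : variety) : bool :=
  match K with PDL => true | _ => false end.
Definition has_bot (K : variety) : bool :=
  match K with bISL | PDL | HA => true | _ => false end.

Section VarietyDefs.
Variable A : alg.
Local Notation "x ∧ y" := (meet A x y) (at level 40, left associativity).
Local Notation "x ∨ y" := (join A x y) (at level 50, left associativity).
Local Notation "x ⇒ y" := (imp A x y) (at level 55, right associativity).

Definition leA (a b : car A) : Prop := a ∧ b = a.

Definition is_semilattice : Prop :=
  (forall a b c, a ∧ (b ∧ c) = (a ∧ b) ∧ c) /\
  (forall a b, a ∧ b = b ∧ a) /\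
  (forall a, a ∧ a = a).

Definition is_lattice : Prop :=
  is_semilattice /\
  (forall a b c, a ∨ (b ∨ c) = (a ∨ b) ∨ c) /\
  (forall a b, a ∨ b = b ∨ a) /\
  (forall a, a ∨ a = a) /\
  (forall a b, a ∧ (a ∨ b) = a) /\
  (forall a b, a ∨ (a ∧ b) = a).

Definition is_distributive : Prop :=
  forall a b c, a ∧ (b ∨ c) = (a ∧ b) ∨ (a ∧ c).

Definition top_max : Prop := forall a, leA a (top A).
Definition bot_min : Prop := forall a, leA (bot A) a.

Definition residuated : Prop :=
  forall a b c, leA (c ∧ a) b <-> leA c (a ⇒ b).

Definition pseudocomplemented : Prop :=
  forall a c, c ∧ a = bot A <-> leA c (neg A a).

Definition is_ISL : Prop := is_semilattice /\ top_max /\ residuated.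
Definition is_bISL : Prop := is_ISL /\ bot_min.
Definition is_PDL : Prop :=
  is_lattice /\ is_distributive /\ bot_min /\ top_max /\ pseudocomplemented.
Definition is_IL : Prop := is_lattice /\ is_ISL.
Definition is_HA : Prop := is_IL /\ bot_min.
End VarietyDefs.

Definition in_variety (K : variety) (A : alg) : Prop :=
  match K with
  | ISL => is_ISL A
  | bISL => is_bISL A
  | PDL => is_PDL A
  | IL => is_IL A
  | HA => is_HA A
  end.

(** Heyting algebra: the HA axioms on <car; /\, \/, ->, 0, 1>
    (the [neg] field is irrelevant). *)
Definition heyting (B : alg) : Prop := is_HA B.

Definition reduct (B : alg) : alg :=
  Alg (car B) (meet B) (join B) (imp B) (fun x => imp B x (bot B)) (bot B) (top B).

Definition embedding (K : variety) (A C : alg) (f : car A -> car C) : Prop :=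
  (forall x y, f x = f y -> x = y) /\
  (forall x y, f (meet A x y) = meet C (f x) (f y)) /\
  f (top A) = top C /\
  (has_join K = true -> forall x y, f (join A x y) = join C (f x) (f y)) /\
  (has_imp K = true -> forall x y, f (imp A x y) = imp C (f x) (f y)) /\
  (has_neg K = true -> forall x, f (neg A x) = neg C (f x)) /\
  (has_bot K = true -> f (bot A) = bot C).

Inductive term : Type :=
  | TVar : nat -> term
  | TMeet : term -> term -> term
  | TJoin : term -> term -> term
  | TImp : term -> term -> term
  | TNeg : term -> term
  | TBot : term
  | TTop : term.

Fixpoint term_in (K : variety) (t : term) : bool :=
  match t with
  | TVar _ => true
  | TMeet s u => has_meet K && term_in K s && term_in K u
  | TJoin s u => has_join K && term_in K s && term_in K u
  | TImp s u => has_imp K && term_in K s && term_in K u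
  | TNeg s => has_neg K && term_in K s
  | TBot => has_bot K
  | TTop => has_top K
  end.

Fixpoint teval (A : alg) (v : nat -> car A) (t : term) : car A :=
  match t with
  | TVar n => v n
  | TMeet s u => meet A (teval A v s) (teval A v u)
  | TJoin s u => join A (teval A v s) (teval A v u)
  | TImp s u => imp A (teval A v s) (teval A v u)
  | TNeg s => neg A (teval A v s)
  | TBot => bot A
  | TTop => top A
  end.

Inductive qf : Type :=
  | FEq : term -> term -> qf
  | FNot : qf -> qf
  | FAnd : qf -> qf -> qf
  | FOr : qf -> qf -> qf.

Fixpoint qf_in (K : variety) (phi : qf) : bool :=
  match phi with
  | FEq s t => term_in K s && term_in K t
  | FNot p => qf_in K p
  | FAnd p q => qf_in K p && qf_in K q
  | FOr p q => qf_in K p && qf_in K q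
  end.

Fixpoint holds (A : alg) (v : nat -> car A) (phi : qf) : Prop :=
  match phi with
  | FEq s t => teval A v s = teval A v t
  | FNot p => ~ holds A v p
  | FAnd p q => holds A v p /\ holds A v q
  | FOr p q => holds A v p \/ holds A v q
  end.

(** A universal sentence of the language of K is the universal closure
    [forall x0 x1 ..., phi] of a quantifier-free formula phi of that language. *)
Definition sat_univ (A : alg) (phi : qf) : Prop :=
  forall v : nat -> car A, holds A v phi.

(** C ∈ U(A) (the universal class generated by A, in the language of K):
    C satisfies every universal K-sentence true in A. *)
Definition in_univ_class (K : variety) (A C : alg) : Prop :=
  forall phi : qf, qf_in K phi = true -> sat_univ A phi -> sat_univ C phi.

(* Every finite subset F of A lies in a K-subalgebra of A that is the K-reduct of a
   Heyting algebra: A itself for HA, the principal filter of the meet of F for IL,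
   and for ISL, bISL and PDL the subalgebra generated by F (and 0, for bISL), which
   is finite and hence a lattice with relative pseudocomplements.  Local finiteness
   goes through minterms.  In an ISL generated by G every element is a meet of
   elements u ⇒ p with p ∈ G, and u ⇒ p = ⋀ {m ⇒ p | m ∧ (u ⇒ p) ≤ p}, m ranging
   over the minterms relative to p over G and the elements p ⇒ x; these are finitely
   many by induction on |G|, because p ⇒ x lies in the subalgebra generated by
   p ⇒ (G ∖ {p}).  In a PDL, ¬ u is likewise the meet of the ¬ m over the minterms
   m ≤ u over G, and the rest is a finitely generated distributive lattice.
   An ultraproduct of these Heyting algebras over an ultrafilter containing every
   {F | x ∈ F} is a Heyting algebra into which A embeds, and by Łoś's theorem it
   satisfies every universal sentence true in all of them, hence every universal
   sentence true in A. *)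

From Stdlib Require Import List Classical ClassicalEpsilon ProofIrrelevance
  FunctionalExtensionality PropExtensionality Wf_nat Lia.
Import ListNotations.
From mathcomp Require boolp filter.

Notation asbool := boolp.asbool.

Lemma asbool_true_iff (P : Prop) : asbool P = true <-> P.
Proof. symmetry; apply Bool.reflect_iff, boolp.asboolP. Qed.

Fixpoint sublists {T} (l : list T) : list (list T) :=
  match l with
  | [] => [[]]
  | a :: l' => map (cons a) (sublists l') ++ sublists l'
  end.

Lemma filter_in_sublists {T} (f : T -> bool) l : In (filter f l) (sublists l).
Proof.
  induction l as [|a l IH]; simpl; [now left|].
  apply in_or_app; destruct (f a); [left; now apply in_map | now right].
Qed.

Definition finite {T} (P : T -> Prop) : Prop := exists E : list T, forall x, P x -> In x E.

Lemma finite_mono {T} (P Q : T -> Prop) :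
  (forall x, P x -> Q x) -> finite Q -> finite P.
Proof. intros PQ [E HE]; exists E; auto. Qed.

Lemma finite_union {T V} (l : list T) (Q : T -> V -> Prop) :
  (forall p, In p l -> finite (Q p)) -> finite (fun w => exists p, In p l /\ Q p w).
Proof.
  induction l as [|a l IH]; intros hQ.
  - exists []; intros w (p & [] & _).
  - destruct (hQ a (or_introl eq_refl)) as [Ea HEa].
    destruct IH as [E HE]; [intros p hp; apply hQ; now right|].
    exists (Ea ++ E); intros w (p & [<-|hp] & hw); apply in_or_app; [left; auto|].
    right; apply HE; eauto.
Qed.

Lemma finite_or {T} (P Q : T -> Prop) : finite P -> finite Q -> finite (fun x => P x \/ Q x).
Proof.
  intros [E HE] [E' HE']. exists (E ++ E'). intros x [hx|hx]; apply in_or_app; auto.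
Qed.

Lemma finite_big {T V} (big : list T -> V)
  (big_ext : forall X Y, (forall x, In x X <-> In x Y) -> big X = big Y) (P : T -> Prop) :
  finite P -> finite (fun v => exists X, (forall x, In x X -> P x) /\ v = big X).
Proof.
  intros [E HE]. exists (map big (sublists E)). intros v (X & HX & ->).
  rewrite (big_ext X (filter (fun x => asbool (In x X)) E)).
  - apply in_map, filter_in_sublists.
  - intros x. rewrite filter_In, asbool_true_iff. split; [|tauto]. auto.
Qed.

(** * Ultraproducts *)

Record ultrafilter (I : Type) : Type := {
  uf :> (I -> Prop) -> Prop;
  uf_mono : forall X Y : I -> Prop, (forall i, X i -> Y i) -> uf X -> uf Y;
  uf_and : forall X Y, uf X -> uf Y -> uf (fun i => X i /\ Y i);
  uf_proper : ~ uf (fun _ => False);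
  uf_ultra : forall X, uf X \/ uf (fun i => ~ X i)
}.
Arguments uf_mono {I} _ _ _.
Arguments uf_and {I} _ _ _.
Arguments uf_proper {I} _.
Arguments uf_ultra {I} _ _.

Lemma ultrafilter_extending {I J : Type} (E : J -> I -> Prop) :
  (forall js : list J, exists i, forall j, In j js -> E j i) ->
  exists U : ultrafilter I, forall j, U (E j).
Proof.
  intros fip.
  pose (F := fun X : I -> Prop =>
    exists js : list J, forall i, (forall j, In j js -> E j i) -> X i).
  assert (PF : filter.ProperFilter F).
  { constructor.
    - intros [js Hjs]. destruct (fip js) as [i Hi]. exact (Hjs i Hi).
    - constructor.
      + exists []. intros; exact Logic.I.
      + intros P Q [js1 H1] [js2 H2]. exists (js1 ++ js2). intros i Hi.
        split; [apply H1 | apply H2]; intros j Hj; apply Hi, in_or_app; auto.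
      + intros P Q PQ [js H]. exists js. auto. }
  destruct (filter.ultraFilterLemma PF) as [G [UG FG]].
  unshelve eexists (Build_ultrafilter _ G _ _ _ _).
  - intros X Y XY. exact (@filter.filterS I G _ X Y XY).
  - intros X Y. exact (@filter.filterI I G _ X Y).
  - exact (@filter.filter_not_empty I G _).
  - intros X. exact (filter.in_ultra_setVsetC X UG).
  - intros j. apply FG. exists [j]. intros i Hi. apply Hi. now left.
Qed.

Section UltrafilterFacts.
Variables (I : Type) (U : ultrafilter I).

Lemma uf_true : U (fun _ => True).
Proof.
  destruct (uf_ultra U (fun _ => True)) as [h|h]; [exact h|].
  exact (uf_mono U _ _ (fun _ _ => Logic.I) h).
Qed.

Lemma uf_inhabited X : U X -> exists i, X i.
Proof.
  intros h. apply NNPP. intros hn. apply (uf_proper U).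
  apply (uf_mono U X); [|exact h]. intros i xi. apply hn. now exists i.
Qed.

Lemma uf_andE X Y : U (fun i => X i /\ Y i) <-> U X /\ U Y.
Proof.
  split.
  - intros h; split; refine (uf_mono U _ _ _ h); tauto.
  - intros [hx hy]; now apply uf_and.
Qed.

Lemma uf_notE X : U (fun i => ~ X i) <-> ~ U X.
Proof.
  split.
  - intros h hx. apply (uf_proper U).
    refine (uf_mono U _ _ _ (uf_and U _ _ h hx)). tauto.
  - intros h. destruct (uf_ultra U X); tauto.
Qed.

Lemma uf_orE X Y : U (fun i => X i \/ Y i) <-> U X \/ U Y.
Proof.
  split.
  - intros h. apply NNPP. intros hn. apply (uf_proper U).
    apply not_or_and in hn as [hx hy].
    apply uf_notE in hx, hy.
    refine (uf_mono U _ _ _ (uf_and U _ _ (uf_and U _ _ h hx) hy)). tauto.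
  - intros [h|h]; refine (uf_mono U _ _ _ h); tauto.
Qed.
End UltrafilterFacts.
Arguments uf_true {I} U.

Section Ultraproduct.
Variables (I : Type) (U : ultrafilter I) (H : I -> alg).

Definition uprod : Type := forall i, car (H i).

Definition ueq (h k : uprod) : Prop := U (fun i => h i = k i).

Lemma ueq_trans h k l : ueq h k -> ueq k l -> ueq h l.
Proof. intros hk kl. refine (uf_mono U _ _ _ (uf_and U _ _ hk kl)). intros i [-> ->]; auto. Qed.

Lemma ueq_sym h k : ueq h k -> ueq k h.
Proof. apply uf_mono; auto. Qed.

(** The quotient by [ueq] is realised as the type of equivalence classes. *)
Definition ucar : Type := {P : uprod -> Prop | exists h, P = ueq h}.

Definition uclass (h : uprod) : ucar := exist _ (ueq h) (ex_intro _ h eq_refl).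

Definition urep (q : ucar) : uprod :=
  proj1_sig (constructive_indefinite_description _ (proj2_sig q)).

Lemma uclass_urep q : uclass (urep q) = q.
Proof.
  destruct q as [P hP]. apply subset_eq_compat. unfold urep; simpl.
  destruct (constructive_indefinite_description _ _); simpl. auto.
Qed.

Lemma uclass_eq h k : uclass h = uclass k <-> ueq h k.
Proof.
  split.
  - intros e. apply (f_equal (@proj1_sig _ _)) in e. simpl in e.
    rewrite e. exact (uf_mono U _ _ (fun _ _ => eq_refl) (uf_true U)).
  - intros e. apply subset_eq_compat, functional_extensionality. intros l.
    apply propositional_extensionality.
    split; [apply ueq_trans, ueq_sym, e | apply ueq_trans, e].
Qed.

Lemma ueq_urep_uclass h : ueq (urep (uclass h)) h.
Proof. apply uclass_eq. now rewrite uclass_urep. Qed.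

Definition ulift1 (op : forall i, car (H i) -> car (H i)) (q : ucar) : ucar :=
  uclass (fun i => op i (urep q i)).

Definition ulift2 (op : forall i, car (H i) -> car (H i) -> car (H i)) (q r : ucar) : ucar :=
  uclass (fun i => op i (urep q i) (urep r i)).

Lemma ulift1_uclass op h : ulift1 op (uclass h) = uclass (fun i => op i (h i)).
Proof.
  apply uclass_eq. refine (uf_mono U _ _ _ (ueq_urep_uclass h)). now intros i ->.
Qed.

Lemma ulift2_uclass op h k :
  ulift2 op (uclass h) (uclass k) = uclass (fun i => op i (h i) (k i)).
Proof.
  apply uclass_eq.
  refine (uf_mono U _ _ _ (uf_and U _ _ (ueq_urep_uclass h) (ueq_urep_uclass k))).
  now intros i [-> ->].
Qed.

Definition ultraproduct : alg :=
  Alg ucar (ulift2 (fun i => meet (H i))) (ulift2 (fun i => join (H i)))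
    (ulift2 (fun i => imp (H i))) (ulift1 (fun i => neg (H i)))
    (uclass (fun i => bot (H i))) (uclass (fun i => top (H i))).

Definition ucoord (v : nat -> ucar) (i : I) : nat -> car (H i) := fun n => urep (v n) i.

Lemma teval_ultraproduct v t :
  teval ultraproduct v t = uclass (fun i => teval (H i) (ucoord v i) t).
Proof.
  induction t; simpl; try reflexivity.
  - symmetry; apply uclass_urep.
  - rewrite IHt1, IHt2. apply ulift2_uclass.
  - rewrite IHt1, IHt2. apply ulift2_uclass.
  - rewrite IHt1, IHt2. apply ulift2_uclass.
  - rewrite IHt. apply ulift1_uclass.
Qed.

Theorem los v phi :
  holds ultraproduct v phi <-> U (fun i => holds (H i) (ucoord v i) phi).
Proof.
  induction phi; simpl.
  - rewrite !teval_ultraproduct. apply uclass_eq.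
  - rewrite IHphi, uf_notE. reflexivity.
  - rewrite IHphi1, IHphi2, uf_andE. reflexivity.
  - rewrite IHphi1, IHphi2, uf_orE. reflexivity.
Qed.

Corollary sat_univ_ultraproduct phi :
  (forall i, sat_univ (H i) phi) -> sat_univ ultraproduct phi.
Proof.
  intros h v. apply los. exact (uf_mono U _ _ (fun i _ => h i _) (uf_true U)).
Qed.
End Ultraproduct.

Lemma ultraproduct_reduct_neg I (U : ultrafilter I) (H : I -> alg) q :
  let B := ultraproduct I U (fun i => reduct (H i)) in neg B q = imp B q (bot B).
Proof.
  simpl. unfold ulift1, ulift2. apply uclass_eq.
  refine (uf_mono U _ _ _ (ueq_urep_uclass _ _ _ _)). now intros i ->.
Qed.

Lemma holds_reduct C (negC : forall x, neg C x = imp C x (bot C)) v phi :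
  holds (reduct C) v phi <-> holds C v phi.
Proof.
  assert (Ht : forall t, teval (reduct C) v t = teval C v t).
  { induction t; simpl; congruence. }
  induction phi; simpl; rewrite ?Ht; tauto.
Qed.

Section EmbeddingTransfer.
Variables (K : variety) (C A : alg) (g : car C -> car A).
Hypothesis g_emb : embedding K C A g.

Lemma embedding_teval w t :
  term_in K t = true -> g (teval C w t) = teval A (fun n => g (w n)) t.
Proof.
  destruct g_emb as (_ & Hm & Ht & Hj & Hi & Hn & Hb).
  induction t; simpl; intros ht; rewrite ?Bool.andb_true_iff in ht;
    try reflexivity; try assumption.
  - rewrite Hm, IHt1, IHt2; tauto.
  - rewrite Hj, IHt1, IHt2; tauto.
  - rewrite Hi, IHt1, IHt2; tauto.
  - rewrite Hn, IHt; tauto.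
  - now rewrite Hb.
Qed.

Lemma embedding_holds w phi :
  qf_in K phi = true -> (holds C w phi <-> holds A (fun n => g (w n)) phi).
Proof.
  induction phi; simpl; intros hq; rewrite ?Bool.andb_true_iff in hq.
  - rewrite <- !embedding_teval by tauto.
    split; [congruence | apply (proj1 g_emb)].
  - rewrite IHphi by assumption; tauto.
  - rewrite IHphi1, IHphi2 by tauto; tauto.
  - rewrite IHphi1, IHphi2 by tauto; tauto.
Qed.

Corollary sat_univ_embedding phi :
  qf_in K phi = true -> sat_univ A phi -> sat_univ C phi.
Proof. intros hq hA w. apply embedding_holds; auto. Qed.
End EmbeddingTransfer.

Definition FImp (p q : qf) : qf := FOr (FNot p) q.

Definition HA_axioms : qf :=
  let x := TVar 0 in let y := TVar 1 in let z := TVar 2 in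
  FAnd (FEq (TMeet x (TMeet y z)) (TMeet (TMeet x y) z))
 (FAnd (FEq (TMeet x y) (TMeet y x))
 (FAnd (FEq (TMeet x x) x)
 (FAnd (FEq (TJoin x (TJoin y z)) (TJoin (TJoin x y) z))
 (FAnd (FEq (TJoin x y) (TJoin y x))
 (FAnd (FEq (TJoin x x) x)
 (FAnd (FEq (TMeet x (TJoin x y)) x)
 (FAnd (FEq (TJoin x (TMeet x y)) x)
 (FAnd (FEq (TMeet x TTop) x)
 (FAnd (FImp (FEq (TMeet (TMeet z x) y) (TMeet z x)) (FEq (TMeet z (TImp x y)) z))
 (FAnd (FImp (FEq (TMeet z (TImp x y)) z) (FEq (TMeet (TMeet z x) y) (TMeet z x)))
       (FEq (TMeet TBot x) TBot))))))))))).

Lemma heyting_sat_HA_axioms C : heyting C <-> sat_univ C HA_axioms.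
Proof.
  unfold heyting, is_HA, is_IL, is_lattice, is_ISL, is_semilattice,
    top_max, bot_min, residuated, leA.
  split.
  - intros [[[[Sa [Sc Si]] [Ja [Jc [Ji [Ab1 Ab2]]]]] [_ [Tm Re]]] Bm] w.
    simpl. repeat split; auto; apply imply_to_or, Re.
  - intros h.
    pose (v3 (a b c : car C) := fun n : nat => match n with 0 => a | 1 => b | _ => c end).
    assert (G : forall a b c, holds C (v3 a b c) HA_axioms) by (intros; apply h).
    simpl in G.
    repeat split; intros;
      try solve [apply (G a b c) | apply (G a b a) | apply (G a a a)].
    + destruct (G a b c) as (_&_&_&_&_&_&_&_&_&R&_). destruct R; tauto.
    + destruct (G a b c) as (_&_&_&_&_&_&_&_&_&_&R&_). destruct R; tauto.
Qed.

Definition locally_heyting (K : variety) (A : alg) : Prop :=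
  forall F : list (car A), exists (H : alg) (f : car H -> car A),
    heyting H /\ embedding K (reduct H) A f /\ forall x, In x F -> exists y, f y = x.

Section UltraproductOfSubalgebras.
Variables (K : variety) (A : alg) (I : Type) (U : ultrafilter I) (H : I -> alg).
Variable val : forall i, car (H i) -> car A.
Hypothesis H_heyting : forall i, heyting (H i).
Hypothesis val_emb : forall i, embedding K (reduct (H i)) A (val i).
Hypothesis val_onto : forall x, U (fun i => exists y, val i y = x).

Let HR i := reduct (H i).
Let B := ultraproduct I U HR.

Definition preimage i (x : car A) : car (H i) :=
  epsilon (inhabits (top (H i))) (fun y => val i y = x).

Lemma val_preimage x : U (fun i => val i (preimage i x) = x).
Proof. refine (uf_mono U _ _ _ (val_onto x)). intros i hx. exact (epsilon_spec _ _ hx). Qed.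

Definition uembed (x : car A) : car B :=
  uclass I U HR (fun i => preimage i x).

Lemma uembed_inj x y : uembed x = uembed y -> x = y.
Proof.
  unfold uembed. intros e. apply uclass_eq in e.
  destruct (uf_inhabited I U _ (uf_and U _ _ e (uf_and U _ _ (val_preimage x) (val_preimage y))))
    as (i & e1 & e2 & e3).
  now rewrite <- e2, <- e3, e1.
Qed.

Lemma uembed_op1 op opA (hop : forall i a, val i (op i a) = opA (val i a)) x :
  uembed (opA x) = ulift1 I U HR op (uembed x).
Proof.
  unfold uembed at 2. rewrite ulift1_uclass. apply uclass_eq.
  refine (uf_mono U _ _ _ (uf_and U _ _ (val_preimage x) (val_preimage (opA x)))).
  intros i [e1 e2]. apply (proj1 (val_emb i)). simpl. now rewrite e2, hop, e1.
Qed.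

Lemma uembed_op2 op opA (hop : forall i a b, val i (op i a b) = opA (val i a) (val i b)) x y :
  uembed (opA x y) = ulift2 I U HR op (uembed x) (uembed y).
Proof.
  unfold uembed at 2 3. rewrite ulift2_uclass. apply uclass_eq.
  refine (uf_mono U _ _ _ (uf_and U _ _ (uf_and U _ _ (val_preimage x) (val_preimage y))
                                         (val_preimage (opA x y)))).
  intros i [[e1 e2] e3]. apply (proj1 (val_emb i)). simpl. now rewrite e3, hop, e1, e2.
Qed.

Lemma uembed_const c cA (hc : forall i, val i (c i) = cA) : uembed cA = uclass I U HR c.
Proof.
  apply uclass_eq. refine (uf_mono U _ _ _ (val_preimage cA)).
  intros i e. apply (proj1 (val_emb i)). simpl. now rewrite e, hc.
Qed.

Lemma uembed_embedding : embedding K A (reduct B) uembed.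
Proof.
  repeat split.
  - exact uembed_inj.
  - apply uembed_op2. intros i. apply (val_emb i).
  - apply uembed_const. intros i. apply (val_emb i).
  - intros hK. apply uembed_op2. intros i. now apply (val_emb i).
  - intros hK. apply uembed_op2. intros i. now apply (val_emb i).
  - intros hK x. transitivity (neg B (uembed x)); [|apply ultraproduct_reduct_neg].
    apply uembed_op1. intros i. now apply (val_emb i).
  - intros hK. apply uembed_const. intros i. now apply (val_emb i).
Qed.

Theorem ultraproduct_extension :
  exists (B : alg) (f : car A -> car (reduct B)),
    heyting B /\ embedding K A (reduct B) f /\ in_univ_class K A (reduct B).
Proof.
  exists B, uembed. split; [|split].
  - apply heyting_sat_HA_axioms, sat_univ_ultraproduct.
    intros i. apply heyting_sat_HA_axioms, H_heyting.
  - exact uembed_embedding.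
  - intros phi hq hA v. apply holds_reduct; [apply ultraproduct_reduct_neg|].
    apply sat_univ_ultraproduct. intros i.
    exact (sat_univ_embedding K (reduct (H i)) A (val i) (val_emb i) phi hq hA).
Qed.
End UltraproductOfSubalgebras.

Theorem heyting_extension_of_locally_heyting K A :
  locally_heyting K A ->
  exists (B : alg) (f : car A -> car (reduct B)),
    heyting B /\ embedding K A (reduct B) f /\ in_univ_class K A (reduct B).
Proof.
  intros hloc.
  destruct (ultrafilter_extending (fun (x : car A) F => In x F)) as [U hU].
  { intros js. exists js. auto. }
  assert (hcover : forall F, exists p : {H : alg & car H -> car A},
    heyting (projT1 p) /\ embedding K (reduct (projT1 p)) A (projT2 p) /\
    forall x, In x F -> exists y, projT2 p y = x).
  { intros F. destruct (hloc F) as (H & f & h). now exists (existT _ H f). }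
  pose (cover F := proj1_sig (constructive_indefinite_description _ (hcover F))).
  pose proof (fun F => proj2_sig (constructive_indefinite_description _ (hcover F))) as hc.
  apply (ultraproduct_extension K A _ U (fun F => projT1 (cover F)) (fun F => projT2 (cover F)));
    intros F; try apply hc.
  refine (uf_mono U _ _ _ (hU F)). intros G hG. now apply hc.
Qed.

(** * Semilattices and their finite subalgebras *)

Existing Class is_semilattice.
Existing Class top_max.
Existing Class is_lattice.

#[global] Instance lattice_semilattice (A : alg) `{Hl : is_lattice A} : is_semilattice A :=
  proj1 Hl.

Section Semilattice.
Context {A : alg} `{Hsl : is_semilattice A}.
Local Notation "x ∧ y" := (meet A x y) (at level 40, left associativity).
Local Notation "x ≤ y" := (leA A x y) (at level 70).

Lemma meetA x y z : x ∧ (y ∧ z) = (x ∧ y) ∧ z. Proof. apply Hsl. Qed.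
Lemma meetC x y : x ∧ y = y ∧ x. Proof. apply Hsl. Qed.
Lemma meetxx x : x ∧ x = x. Proof. apply Hsl. Qed.

Lemma leA_refl x : x ≤ x. Proof. apply meetxx. Qed.

Lemma leA_anti x y : x ≤ y -> y ≤ x -> x = y.
Proof. unfold leA. intros xy yx. now rewrite <- xy, meetC. Qed.

Lemma leA_trans x y z : x ≤ y -> y ≤ z -> x ≤ z.
Proof. unfold leA. intros xy yz. now rewrite <- xy, <- meetA, yz. Qed.

Lemma leA_meetl x y : x ∧ y ≤ x.
Proof. unfold leA. now rewrite (meetC x y), <- meetA, meetxx. Qed.

Lemma leA_meetr x y : x ∧ y ≤ y.
Proof. unfold leA. now rewrite <- meetA, meetxx. Qed.

Lemma leA_meet x y z : z ≤ x ∧ y <-> z ≤ x /\ z ≤ y.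
Proof.
  split.
  - intros h. split; eapply leA_trans; eauto using leA_meetl, leA_meetr.
  - unfold leA. intros [zx zy]. now rewrite meetA, zx, zy.
Qed.

Lemma leA_meet2 x y x' y' : x ≤ x' -> y ≤ y' -> x ∧ y ≤ x' ∧ y'.
Proof.
  intros hx hy. apply leA_meet. split.
  - apply (leA_trans _ x); [apply leA_meetl | exact hx].
  - apply (leA_trans _ y); [apply leA_meetr | exact hy].
Qed.

Lemma lattice_of_lub :
  (forall x y z, leA A (join A x y) z <-> x ≤ z /\ y ≤ z) -> is_lattice A.
Proof.
  intros lub.
  assert (ubl : forall x y, x ≤ join A x y) by (intros; apply (lub x y), leA_refl).
  assert (ubr : forall x y, y ≤ join A x y) by (intros; apply (lub x y), leA_refl).
  repeat split; try apply Hsl; intros.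
  - apply leA_anti; apply lub; split.
    + apply (leA_trans _ (join A a b)); apply ubl.
    + apply lub; split; [apply (leA_trans _ (join A a b)) | ]; apply ubl || apply ubr.
    + apply lub; split; [| apply (leA_trans _ (join A b c))]; apply ubl || apply ubr.
    + apply (leA_trans _ (join A b c)); apply ubr.
  - apply leA_anti; apply lub; split; apply ubl || apply ubr.
  - apply leA_anti; [apply lub; split; apply leA_refl | apply ubl].
  - apply ubl.
  - apply leA_anti; [apply lub; split; [apply leA_refl | apply leA_meetl] | apply ubl].
Qed.
End Semilattice.


Section Bounded.
Context {A : alg} `{is_semilattice A} `{Htm : top_max A}.
Local Notation "x ∧ y" := (meet A x y) (at level 40, left associativity).
Local Notation "x ≤ y" := (leA A x y) (at level 70).

Lemma leA_top x : x ≤ top A. Proof. apply Htm. Qed.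

Definition meetl (l : list (car A)) : car A := fold_right (meet A) (top A) l.

Lemma meetl_lb l x : In x l -> meetl l ≤ x.
Proof.
  induction l as [|a l IH]; simpl; [tauto|]. intros [<-|h].
  - apply leA_meetl.
  - eapply leA_trans; [apply leA_meetr | auto].
Qed.

Lemma meetl_glb l c : (forall x, In x l -> c ≤ x) -> c ≤ meetl l.
Proof.
  induction l as [|a l IH]; simpl; intros h; [apply leA_top|].
  apply leA_meet; split; auto.
Qed.

Lemma meetl_app l1 l2 : meetl (l1 ++ l2) = meetl l1 ∧ meetl l2.
Proof.
  induction l1 as [|a l IH]; simpl.
  - rewrite meetC. symmetry. apply leA_top.
  - now rewrite IH, meetA.
Qed.

Lemma meetl_ext l1 l2 : (forall x, In x l1 <-> In x l2) -> meetl l1 = meetl l2.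
Proof.
  intros h. apply leA_anti; apply meetl_glb; intros x hx; apply meetl_lb, h; auto.
Qed.

Lemma meetl_closed (D : car A -> Prop) :
  D (top A) -> (forall x y, D x -> D y -> D (x ∧ y)) ->
  forall l, (forall x, In x l -> D x) -> D (meetl l).
Proof.
  intros Dt Dm l. induction l as [|a l IH]; simpl; intros h; auto.
Qed.

Definition meets_of (P : car A -> Prop) (x : car A) : Prop :=
  exists X, (forall a, In a X -> P a) /\ x = meetl X.

Lemma finite_meets_of P : finite P -> finite (meets_of P).
Proof. apply finite_big, meetl_ext. Qed.

Lemma meets_of_meet P x y : meets_of P x -> meets_of P y -> meets_of P (x ∧ y).
Proof.
  intros (X & hX & ->) (Y & hY & ->). exists (X ++ Y). split; [|symmetry; apply meetl_app].
  intros a ha. apply in_app_or in ha as [ha|ha]; auto.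
Qed.

Section FiniteJoin.
Variables (D : car A -> Prop) (E : list (car A)).
Hypotheses (D_top : D (top A)) (D_meet : forall x y, D x -> D y -> D (x ∧ y)).
Hypothesis E_covers : forall x, D x -> In x E.

Definition fin_join (x y : car A) : car A :=
  meetl (filter (fun e => asbool (D e /\ x ≤ e /\ y ≤ e)) E).

Lemma fin_join_closed x y : D (fin_join x y).
Proof.
  apply (meetl_closed D); auto. intros e he. apply filter_In in he as [_ he].
  rewrite asbool_true_iff in he. tauto.
Qed.

Lemma fin_join_lub x y z : D z -> (fin_join x y ≤ z <-> x ≤ z /\ y ≤ z).
Proof.
  intros hz.
  assert (ub : x ≤ fin_join x y /\ y ≤ fin_join x y).
  { split; apply meetl_glb; intros e he; apply filter_In in he as [_ he];
      rewrite asbool_true_iff in he; tauto. }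
  split.
  - intros h. split; apply (leA_trans _ (fin_join x y)); tauto.
  - intros [xz yz]. apply meetl_lb, filter_In. split; auto. now apply asbool_true_iff.
Qed.
End FiniteJoin.
End Bounded.

Ltac solve_meet :=
  first
  [ assumption
  | apply leA_refl
  | apply leA_top
  | match goal with
    | |- leA _ _ (meet _ _ _) => apply leA_meet; split; solve_meet
    | |- leA _ (meet _ _ _) _ =>
        first [ eapply leA_trans; [apply leA_meetl | solve_meet]
              | eapply leA_trans; [apply leA_meetr | solve_meet] ]
    end ].

Section SubHeyting.
Context {A : alg} `{is_semilattice A} `{top_max A}.
Local Notation "x ∧ y" := (meet A x y) (at level 40, left associativity).
Local Notation "x ≤ y" := (leA A x y) (at level 70).
Variables (D : car A -> Prop) (jn im : car A -> car A -> car A) (b : car A).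
Hypotheses (D_top : D (top A)) (D_meet : forall x y, D x -> D y -> D (x ∧ y))
  (D_join : forall x y, D x -> D y -> D (jn x y))
  (D_imp : forall x y, D x -> D y -> D (im x y)) (D_bot : D b).

Definition sub_alg : alg :=
  Alg {x | D x}
    (fun x y => exist _ _ (D_meet _ _ (proj2_sig x) (proj2_sig y)))
    (fun x y => exist _ _ (D_join _ _ (proj2_sig x) (proj2_sig y)))
    (fun x y => exist _ _ (D_imp _ _ (proj2_sig x) (proj2_sig y)))
    (fun x => exist _ _ (D_imp _ _ (proj2_sig x) D_bot))
    (exist _ _ D_bot) (exist _ _ D_top).

Lemma leA_sub (x y : car sub_alg) : leA sub_alg x y <-> proj1_sig x ≤ proj1_sig y.
Proof.
  destruct x as [x hx], y as [y hy]. unfold leA; simpl. split.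
  - intros e. exact (f_equal (@proj1_sig _ _) e).
  - apply subset_eq_compat.
Qed.

#[local] Instance sub_alg_semilattice : is_semilattice sub_alg.
Proof.
  repeat split; [intros [x hx] [y hy] [z hz] | intros [x hx] [y hy] | intros [x hx]];
    apply subset_eq_compat; apply H.
Qed.

Lemma sub_alg_heyting
  (jn_lub : forall x y z, D x -> D y -> D z -> (jn x y ≤ z <-> x ≤ z /\ y ≤ z))
  (im_res : forall x y z, D x -> D y -> D z -> (z ∧ x ≤ y <-> z ≤ im x y))
  (b_least : forall x, D x -> b ≤ x) :
  heyting sub_alg.
Proof.
  split; [split; [|split; [|split]]|].
  - apply lattice_of_lub. intros [x hx] [y hy] [z hz]. rewrite !leA_sub. now apply jn_lub.
  - exact sub_alg_semilattice.
  - intros [x hx]. apply leA_sub, leA_top.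
  - intros [x hx] [y hy] [z hz]. rewrite !leA_sub. now apply im_res.
  - intros [x hx]. now apply leA_sub, b_least.
Qed.

Lemma sub_alg_embedding (K : variety) :
  (has_join K = true -> forall x y, D x -> D y -> jn x y = join A x y) ->
  (has_imp K = true -> forall x y, D x -> D y -> im x y = imp A x y) ->
  (has_neg K = true -> forall x, D x -> im x b = neg A x) ->
  (has_bot K = true -> b = bot A) ->
  embedding K (reduct sub_alg) A (@proj1_sig _ _).
Proof.
  intros hj hi hn hb. repeat split.
  - intros [x hx] [y hy] e. now apply subset_eq_compat.
  - intros hK [x hx] [y hy]. now apply hj.
  - intros hK [x hx] [y hy]. now apply hi.
  - intros hK [x hx]. now apply hn.
  - exact hb.
Qed.

Lemma sub_alg_onto x : D x -> exists y : car sub_alg, proj1_sig y = x.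
Proof. intros hx. now exists (exist _ x hx). Qed.
End SubHeyting.

Section RelativePseudocomplement.
Context {A : alg} `{is_semilattice A} `{top_max A}.
Local Notation "x ∧ y" := (meet A x y) (at level 40, left associativity).
Local Notation "x ≤ y" := (leA A x y) (at level 70).
(* [n] is the pseudocomplement relative to [p]: [n a = a ⇒ p] in an implicative
   semilattice, and [n a = ¬ a] with [p = 0] in a pseudocomplemented lattice. *)
Variables (p : car A) (n : car A -> car A).
Hypothesis n_spec : forall a c, c ∧ a ≤ p <-> c ≤ n a.

Lemma meet_n_le a : a ∧ n a ≤ p.
Proof. rewrite meetC. apply n_spec, leA_refl. Qed.

Lemma n_meet_split l m : n (l ∧ m) ∧ n (n l ∧ m) ≤ n m.
Proof.
  apply n_spec.
  assert (hl : (n (l ∧ m) ∧ n (n l ∧ m)) ∧ m ≤ n l).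
  { apply n_spec. apply (leA_trans _ ((l ∧ m) ∧ n (l ∧ m))); [solve_meet | apply meet_n_le]. }
  apply (leA_trans _ ((n l ∧ m) ∧ n (n l ∧ m))); [solve_meet | apply meet_n_le].
Qed.

Fixpoint minterms (L : list (car A)) : list (car A) :=
  match L with
  | [] => [top A]
  | l :: L' => map (meet A l) (minterms L') ++ map (meet A (n l)) (minterms L')
  end.

Lemma minterm_decides L m l : In m (minterms L) -> In l L -> m ≤ l \/ m ≤ n l.
Proof.
  revert m. induction L as [|a L IH]; simpl; intros m hm hl; [contradiction|].
  apply in_app_or in hm as [hm|hm]; apply in_map_iff in hm as [m' [<- hm']];
    (destruct hl as [<-|hl]; [first [left; apply leA_meetl | right; apply leA_meetl]|]);
    destruct (IH m' hm' hl) as [h|h]; [left|right|left|right];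
    apply (leA_trans _ m'); auto; apply leA_meetr.
Qed.

Lemma meetl_n_minterms L : meetl (map n (minterms L)) ≤ p.
Proof.
  induction L as [|l L IH]; simpl.
  - apply n_spec, leA_refl.
  - eapply leA_trans; [|exact IH]. apply meetl_glb. intros x hx.
    apply in_map_iff in hx as [m [<- hm]].
    rewrite map_app, meetl_app, !map_map.
    eapply leA_trans; [|apply (n_meet_split l m)].
    apply leA_meet2; apply meetl_lb, (in_map (fun x => n (_ ∧ x))), hm.
Qed.

Lemma n_meetl_sub u M :
  (forall m, In m M -> m ∧ n u ≤ p \/ m ∧ u ≤ p) -> meetl (map n M) ≤ p ->
  exists X, incl X M /\ n u = meetl (map n X).
Proof.
  intros hdec hM. set (X := filter (fun m => asbool (m ∧ n u ≤ p)) M).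
  exists X. split; [intros m hm; apply filter_In in hm; tauto|].
  apply leA_anti.
  - apply meetl_glb. intros x hx. apply in_map_iff in hx as (m & <- & hm).
    apply filter_In in hm as [_ hm]. rewrite asbool_true_iff in hm.
    apply n_spec. now rewrite meetC.
  - apply n_spec. eapply leA_trans; [|exact hM]. apply meetl_glb.
    intros x hx. apply in_map_iff in hx as (m & <- & hm).
    destruct (classic (m ∧ n u ≤ p)) as [hp|hp].
    + eapply leA_trans; [apply leA_meetl|]. apply meetl_lb, in_map, filter_In.
      now rewrite asbool_true_iff.
    + destruct (hdec m hm) as [h|h]; [contradiction|].
      eapply leA_trans; [apply leA_meetr|]. apply n_spec. now rewrite meetC.
Qed.

Corollary finite_n_image (S : car A -> Prop) M :
  (forall u, S u -> forall m, In m M -> m ∧ n u ≤ p \/ m ∧ u ≤ p) ->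
  meetl (map n M) ≤ p -> finite (fun v => exists u, S u /\ v = n u).
Proof.
  intros hdec hM.
  apply (finite_mono _ (fun v => exists X, (forall x, In x X -> In x M) /\ v = meetl (map n X))).
  - intros v (u & hu & ->). destruct (n_meetl_sub u M (hdec u hu) hM) as (X & hX & e).
    now exists X.
  - apply finite_big; [|now exists M].
    intros X Y hXY. apply meetl_ext. intros x. rewrite !in_map_iff.
    split; intros (y & <- & hy); exists y; split; auto; now apply hXY.
Qed.
End RelativePseudocomplement.

(** * Implicative semilattices are locally finite *)

Section ISL.
Context {A : alg} `{is_semilattice A} `{top_max A}.
Hypothesis Hres : residuated A.
Local Notation "x ∧ y" := (meet A x y) (at level 40, left associativity).
Local Notation "x ⇒ y" := (imp A x y) (at level 55, right associativity).
Local Notation "x ≤ y" := (leA A x y) (at level 70).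

Lemma le_impI a b c : c ∧ a ≤ b -> c ≤ a ⇒ b.
Proof. apply Hres. Qed.

Lemma le_impE a b c : c ≤ a ⇒ b -> c ∧ a ≤ b.
Proof. apply Hres. Qed.

Lemma imp_mp a b : a ∧ (a ⇒ b) ≤ b.
Proof. rewrite meetC. apply le_impE, leA_refl. Qed.

Lemma le_imp a b : b ≤ a ⇒ b.
Proof. apply le_impI, leA_meetl. Qed.

Lemma imp_anti a a' b : a' ≤ a -> a ⇒ b ≤ a' ⇒ b.
Proof.
  intros h. apply le_impI. apply (leA_trans _ (a ∧ (a ⇒ b))); [|apply imp_mp].
  apply leA_meet; split; [eapply leA_trans; [apply leA_meetr | exact h] | apply leA_meetl].
Qed.

Lemma imp_curry a b c : (a ∧ b) ⇒ c = a ⇒ (b ⇒ c).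
Proof.
  apply leA_anti; apply le_impI.
  - apply le_impI. apply (leA_trans _ ((a ∧ b) ∧ ((a ∧ b) ⇒ c))); [solve_meet | apply imp_mp].
  - apply (leA_trans _ (b ∧ (b ⇒ c))); [|apply imp_mp]. apply leA_meet; split; [solve_meet|].
    apply (leA_trans _ (a ∧ (a ⇒ (b ⇒ c)))); [solve_meet | apply imp_mp].
Qed.

Lemma imp_meet a b c : a ⇒ (b ∧ c) = (a ⇒ b) ∧ (a ⇒ c).
Proof.
  assert (mp_bc : (a ⇒ (b ∧ c)) ∧ a ≤ b ∧ c).
  { apply (leA_trans _ (a ∧ (a ⇒ (b ∧ c)))); [solve_meet | apply imp_mp]. }
  apply leA_anti.
  - apply leA_meet; split; apply le_impI; (eapply leA_trans; [exact mp_bc|]);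
      [apply leA_meetl | apply leA_meetr].
  - apply le_impI, leA_meet; split.
    + apply (leA_trans _ (a ∧ (a ⇒ b))); [solve_meet | apply imp_mp].
    + apply (leA_trans _ (a ∧ (a ⇒ c))); [solve_meet | apply imp_mp].
Qed.

Lemma imp_top a : a ⇒ top A = top A.
Proof. apply leA_anti; [apply leA_top | apply le_imp]. Qed.

Lemma imp_xx a : a ⇒ a = top A.
Proof. apply leA_anti; [apply leA_top | apply le_impI, leA_meetr]. Qed.

Lemma top_imp a : top A ⇒ a = a.
Proof.
  apply leA_anti; [|apply le_imp].
  apply (leA_trans _ (top A ∧ (top A ⇒ a))); [solve_meet | apply imp_mp].
Qed.

Lemma imp_imp_distr p x y : p ⇒ (x ⇒ y) = (p ⇒ x) ⇒ (p ⇒ y).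
Proof.
  apply leA_anti; apply le_impI, le_impI.
  - apply (leA_trans _ (x ∧ (x ⇒ y))); [|apply imp_mp]. apply leA_meet; split.
    + apply (leA_trans _ (p ∧ (p ⇒ x))); [solve_meet | apply imp_mp].
    + apply (leA_trans _ (p ∧ (p ⇒ (x ⇒ y)))); [solve_meet | apply imp_mp].
  - apply (leA_trans _ (p ∧ (p ⇒ y))); [|apply imp_mp]. apply leA_meet; split; [solve_meet|].
    apply (leA_trans _ ((p ⇒ x) ∧ ((p ⇒ x) ⇒ (p ⇒ y)))); [|apply imp_mp].
    apply leA_meet; split; [|solve_meet].
    eapply leA_trans; [apply leA_meetr | apply le_imp].
Qed.

Lemma imp_meetl a l : a ⇒ meetl l = meetl (map (imp A a) l).
Proof. induction l as [|b l IH]; simpl; [apply imp_top|]. now rewrite imp_meet, IH. Qed.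

Inductive isl_gen (G : list (car A)) : car A -> Prop :=
  | isl_gen_base g : In g G -> isl_gen G g
  | isl_gen_top : isl_gen G (top A)
  | isl_gen_meet x y : isl_gen G x -> isl_gen G y -> isl_gen G (x ∧ y)
  | isl_gen_imp x y : isl_gen G x -> isl_gen G y -> isl_gen G (x ⇒ y).

Lemma isl_gen_meetl G l : (forall x, In x l -> isl_gen G x) -> isl_gen G (meetl l).
Proof. apply meetl_closed; [apply isl_gen_top | apply isl_gen_meet]. Qed.

Lemma meetl_le_isl_gen G x : isl_gen G x -> meetl G ≤ x.
Proof.
  induction 1.
  - now apply meetl_lb.
  - apply leA_top.
  - now apply leA_meet.
  - eapply leA_trans; [eassumption | apply le_imp].
Qed.

Lemma isl_gen_normal_form G x : isl_gen G x ->
  exists X, x = meetl X /\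
    forall w, In w X -> exists u p, isl_gen G u /\ In p G /\ w = u ⇒ p.
Proof.
  induction 1 as [g hg| |x y _ [X [-> HX]] _ [Y [-> HY]]|x y hx _ _ [Y [-> HY]]].
  - exists [top A ⇒ g]. split.
    + simpl. rewrite top_imp. symmetry. apply leA_top.
    + intros w [<-|[]]. exists (top A), g. repeat split; auto using isl_gen_top.
  - now exists [].
  - exists (X ++ Y). split; [symmetry; apply meetl_app|].
    intros w hw. apply in_app_or in hw as [hw|hw]; auto.
  - exists (map (imp A x) Y). split; [apply imp_meetl|].
    intros w hw. apply in_map_iff in hw as (w' & <- & hw').
    destruct (HY w' hw') as (u & p & hu & hp & ->).
    exists (x ∧ u), p. repeat split; auto using isl_gen_meet. symmetry; apply imp_curry.
Qed.

Lemma isl_gen_imp_shift l1 p l2 x :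
  isl_gen (l1 ++ p :: l2) x -> isl_gen (map (imp A p) (l1 ++ l2)) (p ⇒ x).
Proof.
  induction 1 as [g hg| |x y _ IHx _ IHy|x y _ IHx _ IHy].
  - apply in_app_or in hg as [hg|[<-|hg]].
    + apply isl_gen_base, in_map, in_or_app; auto.
    + rewrite imp_xx. apply isl_gen_top.
    + apply isl_gen_base, in_map, in_or_app; auto.
  - rewrite imp_top. apply isl_gen_top.
  - rewrite imp_meet. now apply isl_gen_meet.
  - rewrite imp_imp_distr. now apply isl_gen_imp.
Qed.

Definition rel_decides (p m u : car A) : Prop := m ∧ (u ⇒ p) ≤ p \/ m ∧ u ≤ p.

Lemma rel_decides_meet p m x y :
  rel_decides p m x -> rel_decides p m y -> rel_decides p m (x ∧ y).
Proof.
  intros [hx|hx] [hy|hy].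
  - left. apply (leA_trans _ (m ∧ (x ⇒ p))); [|exact hx].
    apply leA_meet; split; [apply leA_meetl|]. apply le_impI.
    apply (leA_trans _ (m ∧ (y ⇒ p))); [|exact hy].
    apply leA_meet; split; [solve_meet|]. apply le_impI.
    apply (leA_trans _ ((x ∧ y) ∧ ((x ∧ y) ⇒ p))); [solve_meet | apply imp_mp].
  - right. eapply leA_trans; [|exact hy]. solve_meet.
  - right. eapply leA_trans; [|exact hx]. solve_meet.
  - right. eapply leA_trans; [|exact hx]. solve_meet.
Qed.

Lemma rel_decides_imp p m x y : m ≤ p ⇒ (x ⇒ y) \/ m ≤ (p ⇒ (x ⇒ y)) ⇒ p ->
  rel_decides p m x -> rel_decides p m y -> rel_decides p m (x ⇒ y).
Proof.
  intros hpxy hx [hy|hy].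
  - left. eapply leA_trans; [|exact hy]. apply leA_meet2; [apply leA_refl|].
    apply imp_anti, le_imp.
  - destruct hx as [hx|hx].
    + right. apply (leA_trans _ (m ∧ (x ⇒ p))); [|exact hx].
      apply leA_meet; split; [apply leA_meetl|]. apply le_impI.
      apply (leA_trans _ (m ∧ y)); [|exact hy]. apply leA_meet; split; [solve_meet|].
      apply (leA_trans _ (x ∧ (x ⇒ y))); [solve_meet | apply imp_mp].
    + destruct hpxy as [h|h].
      * left. assert (hmxy : m ≤ x ⇒ y).
        { apply le_impI. apply (leA_trans _ (x ∧ (x ⇒ y))); [|apply imp_mp].
          apply leA_meet; split; [apply leA_meetr|].
          apply (leA_trans _ (p ∧ (p ⇒ (x ⇒ y)))); [|apply imp_mp].
          apply leA_meet; split; [exact hx|].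
          eapply leA_trans; [apply leA_meetl | exact h]. }
        apply (leA_trans _ ((x ⇒ y) ∧ ((x ⇒ y) ⇒ p))); [|apply imp_mp].
        apply leA_meet2; [exact hmxy | apply leA_refl].
      * right. apply (leA_trans _ ((p ⇒ (x ⇒ y)) ∧ ((p ⇒ (x ⇒ y)) ⇒ p))); [|apply imp_mp].
        rewrite (meetC m). apply leA_meet2; [apply le_imp | exact h].
Qed.

(* A minterm over [G] does not decide implications between generated elements on its
   own: the elements [p ⇒ (x ⇒ y)], collected in [C], are needed as well. *)
Lemma isl_gen_rel_decides G C p (hC : forall x, isl_gen G x -> In (p ⇒ x) C)
  m (hm : In m (minterms (fun a => a ⇒ p) (G ++ C))) u :
  isl_gen G u -> rel_decides p m u.
Proof.
  assert (dec : forall l, In l (G ++ C) -> m ≤ l \/ m ≤ l ⇒ p)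
    by (intros l hl; exact (minterm_decides (fun a => a ⇒ p) _ _ _ hm hl)).
  induction 1 as [g hg| |x y _ IHx _ IHy|x y hx IHx hy IHy].
  - destruct (dec g (in_or_app _ _ _ (or_introl hg))) as [h|h].
    + left. apply (leA_trans _ (g ∧ (g ⇒ p))); [solve_meet | apply imp_mp].
    + right. now apply le_impE.
  - left. rewrite top_imp. apply leA_meetr.
  - now apply rel_decides_meet.
  - apply rel_decides_imp; auto. apply dec, in_or_app. right. now apply hC, isl_gen_imp.
Qed.

Theorem isl_gen_finite G : finite (isl_gen G).
Proof.
  induction G as [G IH] using (induction_ltof1 _ (@length _)).
  assert (himp : forall p, In p G -> finite (fun w => exists u, isl_gen G u /\ w = u ⇒ p)).
  { intros p hp. destruct (in_split p G hp) as (l1 & l2 & eG).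
    destruct (IH (map (imp A p) (l1 ++ l2))) as [C hC].
    { unfold ltof. rewrite eG, length_map, !length_app. simpl. lia. }
    apply (finite_n_image p (fun a => a ⇒ p) (fun a c => Hres a p c) _
             (minterms (fun a => a ⇒ p) (G ++ C))).
    - intros u hu m hm. apply (isl_gen_rel_decides G C); auto.
      intros x hx. apply hC. rewrite eG in hx. now apply isl_gen_imp_shift.
    - exact (meetl_n_minterms p _ (fun a c => Hres a p c) _). }
  apply (finite_mono _ (meets_of (fun w => exists p, In p G /\ exists u, isl_gen G u /\ w = u ⇒ p))).
  - intros x hx. destruct (isl_gen_normal_form G x hx) as (X & -> & hX).
    exists X. split; auto. intros w hw. destruct (hX w hw) as (u & p & hu & hp & ->). eauto.
  - now apply finite_meets_of, finite_union.
Qed.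

Lemma isl_gen_heyting_sub K G :
  has_join K = false -> has_neg K = false -> (has_bot K = true -> meetl G = bot A) ->
  exists (B : alg) (f : car B -> car A),
    heyting B /\ embedding K (reduct B) A f /\ forall x, In x G -> exists y, f y = x.
Proof.
  intros hj hn hb. destruct (isl_gen_finite G) as [E hE].
  assert (D_join : forall x y, isl_gen G x -> isl_gen G y -> isl_gen G (fin_join (isl_gen G) E x y)).
  { intros. apply fin_join_closed; [apply isl_gen_top | apply isl_gen_meet]. }
  exists (sub_alg (isl_gen G) (fin_join (isl_gen G) E) (imp A) (meetl G) (isl_gen_top G)
            (isl_gen_meet G) D_join (isl_gen_imp G) (isl_gen_meetl G G (isl_gen_base G))),
    (@proj1_sig _ _).
  split; [|split].
  - apply sub_alg_heyting.
    + intros x y z _ _ hz. now apply fin_join_lub.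
    + intros x y z _ _ _. apply Hres.
    + apply meetl_le_isl_gen.
  - apply sub_alg_embedding; intros hK; rewrite ?hj, ?hn in hK; try discriminate; auto.
  - intros x hx. now apply sub_alg_onto, isl_gen_base.
Qed.

Lemma ISL_locally_heyting : locally_heyting ISL A.
Proof. intros F. apply isl_gen_heyting_sub; [reflexivity | reflexivity | discriminate]. Qed.

Lemma bISL_locally_heyting : bot_min A -> locally_heyting bISL A.
Proof.
  intros Hbm F.
  destruct (isl_gen_heyting_sub bISL (bot A :: F) eq_refl eq_refl (fun _ => Hbm _))
    as (B & f & hB & hf & hcov).
  exists B, f. split; [|split]; auto. intros x hx. apply hcov. now right.
Qed.
End ISL.

Section Lattice.
Context {A : alg} `{Hl : is_lattice A}.
Local Notation "x ∧ y" := (meet A x y) (at level 40, left associativity).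
Local Notation "x ∨ y" := (join A x y) (at level 50, left associativity).
Local Notation "x ≤ y" := (leA A x y) (at level 70).

Lemma leA_joinl x y : x ≤ x ∨ y. Proof. apply Hl. Qed.

Lemma leA_joinr x y : y ≤ x ∨ y.
Proof. destruct Hl as (_ & _ & Jc & _). rewrite Jc. apply leA_joinl. Qed.

Lemma leA_join x y z : x ∨ y ≤ z <-> x ≤ z /\ y ≤ z.
Proof.
  destruct Hl as (_ & Ja & Jc & _ & _ & Ab2).
  assert (join_le : forall a b, a ≤ b -> a ∨ b = b).
  { intros a b h. unfold leA in h. rewrite <- h at 1. now rewrite Jc, meetC, Ab2. }
  split.
  - intros h. split; apply (leA_trans _ (x ∨ y)); auto using leA_joinl, leA_joinr.
  - intros [xz yz].
    assert (e : (x ∨ y) ∨ z = z) by now rewrite <- Ja, (join_le _ _ yz), (join_le _ _ xz).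
    unfold leA. rewrite <- e. apply leA_joinl.
Qed.
End Lattice.

(** * Pseudocomplemented distributive lattices are locally finite *)

Section PDL.
Context {A : alg} `{is_lattice A} `{top_max A}.
Hypotheses (Hd : is_distributive A) (Hbm : bot_min A) (Hpc : pseudocomplemented A).
Local Notation "x ∧ y" := (meet A x y) (at level 40, left associativity).
Local Notation "x ∨ y" := (join A x y) (at level 50, left associativity).
Local Notation "¬ x" := (neg A x) (at level 35).
Local Notation "x ≤ y" := (leA A x y) (at level 70).

Lemma leA_bot x : bot A ≤ x. Proof. apply Hbm. Qed.

Lemma neg_spec a c : c ∧ a ≤ bot A <-> c ≤ ¬ a.
Proof.
  rewrite <- (Hpc a c). split; [|intros ->; apply leA_refl].
  intros h. apply leA_anti; [exact h | apply leA_bot].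
Qed.

Definition joinl (l : list (car A)) : car A := fold_right (join A) (bot A) l.

Lemma joinl_ub l x : In x l -> x ≤ joinl l.
Proof.
  induction l as [|a l IH]; simpl; [tauto|]. intros [<-|h]; [apply leA_joinl|].
  eapply leA_trans; [apply IH, h | apply leA_joinr].
Qed.

Lemma joinl_lub l c : (forall x, In x l -> x ≤ c) -> joinl l ≤ c.
Proof.
  induction l as [|a l IH]; simpl; intros h; [apply leA_bot|].
  apply leA_join; split; auto.
Qed.

Lemma joinl_app l1 l2 : joinl (l1 ++ l2) = joinl l1 ∨ joinl l2.
Proof.
  apply leA_anti.
  - apply joinl_lub. intros x hx. apply in_app_or in hx as [hx|hx].
    + eapply leA_trans; [apply joinl_ub, hx | apply leA_joinl].
    + eapply leA_trans; [apply joinl_ub, hx | apply leA_joinr].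
  - apply leA_join; split; apply joinl_lub; intros x hx; apply joinl_ub, in_or_app; auto.
Qed.

Lemma joinl_ext l1 l2 : (forall x, In x l1 <-> In x l2) -> joinl l1 = joinl l2.
Proof. intros h. apply leA_anti; apply joinl_lub; intros x hx; apply joinl_ub, h; auto. Qed.

Lemma joinl_closed (D : car A -> Prop) :
  D (bot A) -> (forall x y, D x -> D y -> D (x ∨ y)) ->
  forall l, (forall x, In x l -> D x) -> D (joinl l).
Proof.
  intros Db Dj l. induction l as [|a l IH]; simpl; intros h; auto.
Qed.

Lemma meet_joinl c l : c ∧ joinl l = joinl (map (meet A c) l).
Proof.
  induction l as [|a l IH]; simpl.
  - apply leA_anti; [apply leA_meetr | apply leA_bot].
  - now rewrite Hd, IH.
Qed.

Lemma joinl_meet X Y : joinl X ∧ joinl Y = joinl (flat_map (fun a => map (meet A a) Y) X).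
Proof.
  induction X as [|a X IH]; simpl; [apply leA_bot|].
  rewrite joinl_app, <- IH, <- meet_joinl, !(meetC _ (joinl Y)).
  apply Hd.
Qed.

Definition joins_of (P : car A -> Prop) (x : car A) : Prop :=
  exists X, (forall a, In a X -> P a) /\ x = joinl X.

Lemma joins_of_join P x y : joins_of P x -> joins_of P y -> joins_of P (x ∨ y).
Proof.
  intros (X & hX & ->) (Y & hY & ->). exists (X ++ Y). split; [|symmetry; apply joinl_app].
  intros a ha. apply in_app_or in ha as [ha|ha]; auto.
Qed.

Lemma joins_of_meet P x y :
  joins_of (meets_of P) x -> joins_of (meets_of P) y -> joins_of (meets_of P) (x ∧ y).
Proof.
  intros (X & hX & ->) (Y & hY & ->).
  exists (flat_map (fun a => map (meet A a) Y) X). split; [|apply joinl_meet].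
  intros c hc. apply in_flat_map in hc as (a & ha & hc).
  apply in_map_iff in hc as (b & <- & hb). apply meets_of_meet; auto.
Qed.

Lemma joins_of_meets_of P a : P a -> joins_of (meets_of P) a.
Proof.
  intros ha. exists [a]. split.
  - intros b [<-|[]]. exists [a]. split; [intros c [<-|[]]; exact ha|]. symmetry; apply leA_top.
  - simpl. apply leA_anti; [apply leA_joinl | apply leA_join; split; [apply leA_refl | apply leA_bot]].
Qed.

Inductive pdl_gen (G : list (car A)) : car A -> Prop :=
  | pdl_gen_base g : In g G -> pdl_gen G g
  | pdl_gen_bot : pdl_gen G (bot A)
  | pdl_gen_top : pdl_gen G (top A)
  | pdl_gen_meet x y : pdl_gen G x -> pdl_gen G y -> pdl_gen G (x ∧ y)
  | pdl_gen_join x y : pdl_gen G x -> pdl_gen G y -> pdl_gen G (x ∨ y)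
  | pdl_gen_neg x : pdl_gen G x -> pdl_gen G (¬ x).

Lemma pdl_gen_dichotomy G m (hm : In m (minterms (neg A) G)) u :
  pdl_gen G u -> m ≤ u \/ m ∧ u ≤ bot A.
Proof.
  induction 1 as [g hg| | |x y _ IHx _ IHy|x y _ IHx _ IHy|x _ IHx].
  - destruct (minterm_decides _ G m g hm hg) as [h|h]; [now left | right; now apply neg_spec].
  - right. apply leA_meetr.
  - left. apply leA_top.
  - destruct IHx as [hx|hx]; [destruct IHy as [hy|hy]|].
    + left. now apply leA_meet.
    + right. eapply leA_trans; [|exact hy]. solve_meet.
    + right. eapply leA_trans; [|exact hx]. solve_meet.
  - destruct IHx as [hx|hx]; [left; eapply leA_trans; [exact hx | apply leA_joinl]|].
    destruct IHy as [hy|hy]; [left; eapply leA_trans; [exact hy | apply leA_joinr]|].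
    right. rewrite Hd. now apply leA_join.
  - destruct IHx as [hx|hx]; [right | left; now apply neg_spec].
    apply (leA_trans _ (x ∧ ¬ x)); [now apply leA_meet2, leA_refl | apply (meet_n_le _ _ neg_spec)].
Qed.

Lemma pdl_gen_neg_finite G : finite (fun v => exists u, pdl_gen G u /\ v = ¬ u).
Proof.
  apply (finite_n_image (bot A) (neg A) neg_spec _ (minterms (neg A) G)).
  - intros u hu m hm. destruct (pdl_gen_dichotomy G m hm u hu) as [h|h]; [left | now right].
    apply (leA_trans _ (u ∧ ¬ u)); [now apply leA_meet2, leA_refl | apply (meet_n_le _ _ neg_spec)].
  - exact (meetl_n_minterms _ _ neg_spec _).
Qed.

Definition pdl_atom (G : list (car A)) (a : car A) : Prop :=
  In a G \/ exists u, pdl_gen G u /\ a = ¬ u.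

Lemma pdl_gen_normal_form G x : pdl_gen G x -> joins_of (meets_of (pdl_atom G)) x.
Proof.
  induction 1 as [g hg| | |x y _ IHx _ IHy|x y _ IHx _ IHy|x hx _].
  - apply joins_of_meets_of. now left.
  - now exists [].
  - exists [top A]. split; [intros a [<-|[]]; now exists []|].
    simpl. apply leA_anti; [apply leA_joinl | apply leA_join; split; [apply leA_refl | apply leA_bot]].
  - now apply joins_of_meet.
  - now apply joins_of_join.
  - apply joins_of_meets_of. right. eauto.
Qed.

Theorem pdl_gen_finite G : finite (pdl_gen G).
Proof.
  apply (finite_mono _ _ (pdl_gen_normal_form G)).
  apply finite_big; [apply joinl_ext|]. apply finite_meets_of, finite_or.
  - now exists G.
  - apply pdl_gen_neg_finite.
Qed.

Section FiniteImp.
Variables (D : car A -> Prop) (E : list (car A)).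
Hypotheses (D_bot : D (bot A)) (D_join : forall x y, D x -> D y -> D (x ∨ y)).
Hypothesis E_covers : forall x, D x -> In x E.

Definition fin_imp (a b : car A) : car A :=
  joinl (filter (fun z => asbool (D z /\ z ∧ a ≤ b)) E).

Lemma fin_imp_closed a b : D (fin_imp a b).
Proof.
  apply (joinl_closed D); auto. intros z hz. apply filter_In in hz as [_ hz].
  rewrite asbool_true_iff in hz. tauto.
Qed.

Lemma fin_imp_res a b c : D c -> (c ∧ a ≤ b <-> c ≤ fin_imp a b).
Proof.
  intros hc. split.
  - intros h. apply joinl_ub, filter_In. split; auto. now rewrite asbool_true_iff.
  - intros h. apply (leA_trans _ (a ∧ fin_imp a b)).
    + rewrite (meetC a). now apply leA_meet2, leA_refl.
    + unfold fin_imp. rewrite meet_joinl. apply joinl_lub. intros x hx.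
      apply in_map_iff in hx as (z & <- & hz). apply filter_In in hz as [_ hz].
      rewrite asbool_true_iff in hz. rewrite meetC. apply hz.
Qed.
End FiniteImp.

Lemma PDL_locally_heyting : locally_heyting PDL A.
Proof.
  intros F. destruct (pdl_gen_finite F) as [E hE].
  assert (D_imp : forall x y, pdl_gen F x -> pdl_gen F y -> pdl_gen F (fin_imp (pdl_gen F) E x y)).
  { intros. apply fin_imp_closed; [apply pdl_gen_bot | apply pdl_gen_join]. }
  exists (sub_alg (pdl_gen F) (join A) (fin_imp (pdl_gen F) E) (bot A) (pdl_gen_top F)
            (pdl_gen_meet F) (pdl_gen_join F) D_imp (pdl_gen_bot F)),
    (@proj1_sig _ _).
  split; [|split].
  - apply sub_alg_heyting.
    + intros; apply leA_join.
    + intros; now apply fin_imp_res.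
    + intros; apply leA_bot.
  - apply sub_alg_embedding; intros hK; try discriminate; auto.
    intros x hx. apply leA_anti.
    + apply neg_spec, (fin_imp_res _ E hE x (bot A)); [|apply leA_refl].
      apply D_imp; [exact hx | apply pdl_gen_bot].
    + apply (fin_imp_res _ E hE x (bot A) _ (pdl_gen_neg F x hx)), neg_spec, leA_refl.
  - intros x hx. now apply sub_alg_onto, pdl_gen_base.
Qed.
End PDL.

Lemma IL_locally_heyting A `{is_lattice A} `{top_max A} :
  residuated A -> locally_heyting IL A.
Proof.
  intros Hres F. set (D x := leA A (meetl F) x).
  assert (D_meet : forall x y, D x -> D y -> D (meet A x y)) by (intros; now apply leA_meet).
  assert (D_join : forall x y, D x -> D y -> D (join A x y))
    by (intros x y hx _; eapply leA_trans; [exact hx | apply leA_joinl]).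
  assert (D_imp : forall x y, D x -> D y -> D (imp A x y))
    by (intros x y _ hy; eapply leA_trans; [exact hy | now apply le_imp]).
  exists (sub_alg D (join A) (imp A) (meetl F) (leA_top _) D_meet D_join D_imp (leA_refl _)),
    (@proj1_sig _ _).
  split; [|split].
  - apply sub_alg_heyting.
    + intros; apply leA_join.
    + intros; apply Hres.
    + auto.
  - apply sub_alg_embedding; intros; try discriminate; reflexivity.
  - intros x hx. now apply sub_alg_onto, meetl_lb.
Qed.

Lemma HA_locally_heyting A : heyting A -> locally_heyting HA A.
Proof.
  intros hA F. exists A, (fun x => x). split; [exact hA | split].
  - repeat split; try discriminate. auto.
  - intros x _. now exists x.
Qed.

Theorem theorem2p7 (K : variety) (A : alg) (HA_in : in_variety K A) :
  exists (B : alg) (f : car A -> car (reduct B)),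
    heyting B /\ embedding K A (reduct B) f /\ in_univ_class K A (reduct B).
Proof.
  apply heyting_extension_of_locally_heyting.
  destruct K; simpl in HA_in.
  - destruct HA_in as (? & ? & Hres). now apply ISL_locally_heyting.
  - destruct HA_in as ((? & ? & Hres) & Hbm). now apply bISL_locally_heyting.
  - destruct HA_in as (? & Hd & Hbm & ? & Hpc). now apply PDL_locally_heyting.
  - destruct HA_in as (? & ? & ? & Hres). now apply IL_locally_heyting.
  - now apply HA_locally_heyting.
Qed.
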